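(* Let $Z=(z_{ij})$ be the generic $n\times n$ matrix of variables, and let $I,J\subseteq\{1,\ldots,n\}$ with $|I|=|J|$. Suppose every variable dividing the antidiagonal term of the minor $\Delta_{I,J}(Z)$ lies on or above the main antidiagonal of $Z$ (i.e. is some $z_{ij}$ with $i+j\le n+1$). Then among the monomials appearing in $\Delta_{I,J}(Z)$, the antidiagonal term is the unique one of lowest $\omega$-weight.
   Context: $\omega=(\omega_{ij})$ is the integer matrix with $\omega_{ij}=3^{\,n-i-j}$ if $i+j\le n$ and $\omega_{ij}=0$ if $i+j>n$. The $\omega$-weight of a monomial $\prod z_{ij}^{e_{ij}}$ in $\mathbb{C}[z_{ij}]$ is $\sum e_{ij}\omega_{ij}$. $\Delta_{I,J}(Z)$ denotes the minor of $Z$ with row set $I$ and column set $J$; its antidiagonal term is the product of the entries on the main antidiagonal of the corresponding square submatrix (taking rows and columns in increasing order), i.e. for $I=\{i_1<\cdots<i_k\}$, $J=\{j_1<\cdots<j_k\}$ it is $\prod_{r=1}^k z_{i_r,j_{k+1-r}}$. *)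

From HB Require Import structures.
From mathcomp Require Import all_boot all_order all_algebra all_field.
From mathcomp.multinomials Require Import mpoly.
Set Implicit Arguments. Unset Strict Implicit. Unset Printing Implicit Defensive.
Import GRing.Theory.
Local Open Scope ring_scope.

(* Conventions: indices are 0-based ('I_n), so the paper's z_{i+1,j+1}
   is our entry (i, j). *)

Definition genZ (n : nat) : 'M[{mpoly algC[n * n]}]_n :=
  \matrix_(i < n, j < n) 'X_(mxvec_index i j).

Definition omega (n : nat) (i j : 'I_n) : nat :=
  if (i.+1 + j.+1 <= n)%N then (3 ^ (n - i.+1 - j.+1))%N else 0%N.

Definition oweight (n : nat) (m : 'X_{1..n * n}) : nat :=
  (\sum_(i < n) \sum_(j < n) m (mxvec_index i j) * omega i j)%N.

(* A subset of {1..n} of size k, given by its strictly increasing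
   enumeration r : 'I_k -> 'I_n. *)
Definition incr (k n : nat) (r : 'I_k -> 'I_n) : Prop :=
  forall a b : 'I_k, (a < b)%N -> (r a < r b)%N.

Definition minor (n : nat) {k : nat} (r c : 'I_k -> 'I_n) : {mpoly algC[n * n]} :=
  \det (\matrix_(a < k, b < k) genZ n (r a) (c b)).

Definition antidiag_term (n : nat) {k : nat} (r c : 'I_k -> 'I_n) : {mpoly algC[n * n]} :=
  \prod_(a < k) genZ n (r a) (c (rev_ord a)).
Arguments minor n {k} r c.
Arguments antidiag_term n {k} r c.

(* The antidiagonal term of Delta_{I,J} is the monomial of the reversal
   permutation, and the omega-weight of the monomial of a permutation s is
   the assignment cost sum_a omega(i_a, j_(s a)).  Swapping two values of s
   across the first position a where s differs from the reversal is a
   2x2 exchange whose new entry lies on or above the antidiagonal; there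
   omega decreases by a factor 3 along rows and columns, so the exchange
   strictly lowers the cost.  Iterating, the reversal is the unique
   cost-minimal permutation; in particular its monomial is not cancelled in
   the Leibniz expansion, and every other monomial has larger weight. *)

From mathcomp Require Import all_boot all_algebra all_field all_fingroup.
From mathcomp.multinomials Require Import mpoly.
From mathcomp Require Import zify.
Local Open Scope ring_scope.
Import GRing.Theory.

Definition rev_perm k : 'S_k := perm (@rev_ord_inj k).

Lemma rev_permE k (x : 'I_k) : rev_perm k x = rev_ord x.
Proof. exact: permE. Qed.

Lemma perm_rev_first_mismatch {k} {s : 'S_k} {a : 'I_k} :
  (forall x : 'I_k, (x < a)%N -> s x = rev_ord x) -> s a != rev_ord a ->
  exists2 b : 'I_k, (a < b)%N & (s a < s b)%N /\ s b = rev_ord a.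
Proof.
move=> prefix mis; set b := (s^-1)%g (rev_ord a).
have sb : s b = rev_ord a by rewrite permKV.
exists b; last split=> //.
  case: (ltngtP a b) => // [ba | /val_inj ab]; last by move: mis; rewrite -sb ab eqxx.
  by move: (prefix _ ba); rewrite sb => /rev_ord_inj ab; rewrite ab ltnn in ba.
rewrite sb; case: (ltngtP (s a) (rev_ord a)) => // [lt | /val_inj e]; last first.
  by rewrite e eqxx in mis.
have xa : (rev_ord (s a) < a)%N.
  by move: lt (ltn_ord (s a)) (ltn_ord a); rewrite /=; lia.
by move: (prefix _ xa); rewrite rev_ordK => /perm_inj e; rewrite e ltnn in xa.
Qed.

Section AssignmentExchange.

Variables (k : nat) (w : 'I_k -> 'I_k -> nat).

Definition assignment_cost (s : 'S_k) : nat := (\sum_(a < k) w a (s a))%N.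

Lemma assignment_cost_tperm (s : 'S_k) {a b : 'I_k} : a != b ->
  (assignment_cost (tperm a b * s)%g + (w a (s a) + w b (s b))
   = assignment_cost s + (w a (s b) + w b (s a)))%N.
Proof.
move=> ab; have ba : b != a by rewrite eq_sym.
rewrite /assignment_cost (bigD1 a) //= [in RHS](bigD1 a) //=.
rewrite (bigD1 b) //= [in RHS](bigD1 b) //= !permM tpermL tpermR.
rewrite (eq_bigr (fun x => w x (s x))) => [|x /andP[xa xb]]; last first.
  by rewrite permM tpermD // eq_sym.
lia.
Qed.

Hypothesis w_exchange : forall a b x : 'I_k, (a < b)%N -> (x < rev_ord a)%N ->
  (w a (rev_ord a) + w b x < w a x + w b (rev_ord a))%N.

Lemma assignment_cost_rev_perm_min (s : 'S_k) :
  s != rev_perm k -> (assignment_cost (rev_perm k) < assignment_cost s)%N.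
Proof.
pose mismatch (t : 'S_k) := [set x | t x != rev_ord x].
have [N] := ubnP #|mismatch s|; elim: N s => // N IH s mis_lt s_neq.
have [a0 a0_mis] : exists a0, s a0 != rev_ord a0.
  apply/existsP; apply: contraR s_neq => /existsPn same.
  by apply/eqP/permP => x; move: (same x); rewrite negbK rev_permE => /eqP.
have [a /= a_mis a_first] := arg_minnP val (a0_mis : [pred x | s x != rev_ord x] a0).
have prefix (x : 'I_k) : (x < a)%N -> s x = rev_ord x.
  by move=> xa; apply/eqP; apply: contraTT xa => /a_first; rewrite -leqNgt.
have [b ab [sab sb]] := perm_rev_first_mismatch prefix a_mis.
have a_neq_b : a != b by rewrite neq_ltn ab.
have cost_lt : (assignment_cost (tperm a b * s)%g < assignment_cost s)%N.
  rewrite -(ltn_add2r (w a (s a) + w b (s b))) assignment_cost_tperm // ltn_add2l.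
  by have := @w_exchange a b (s a) ab; rewrite -sb; apply.
set s' := (tperm a b * s)%g in cost_lt *.
have [s'_rev | s'_neq] := eqVneq s' (rev_perm k); first by rewrite -s'_rev.
apply: ltn_trans (IH s' _ s'_neq) cost_lt.
have sub : mismatch s' \subset mismatch s :\ a.
  apply/subsetP => x; rewrite !inE /s' permM.
  case: (tpermP a b x) => [-> | -> | xa xb]; first by rewrite sb eqxx.
    by move=> _; rewrite sb (inj_eq rev_ord_inj) [b == a]eq_sym a_neq_b.
  by move=> ->; rewrite andbT; apply/eqP.
apply: leq_ltn_trans (subset_leq_card sub) _.
by move: mis_lt; rewrite (cardsD1 a) inE a_mis.
Qed.

End AssignmentExchange.

Arguments assignment_cost {k} w s.

Lemma omega_gt0 n (i j : 'I_n) : (i.+1 + j.+1 <= n)%N -> (0 < omega i j)%N.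
Proof. by rewrite /omega => ->; rewrite expn_gt0. Qed.

Lemma omega_mul3_le n (i i' j j' : 'I_n) : (i <= i')%N -> (j <= j')%N ->
  (i < i')%N || (j < j')%N -> (omega i' j' * 3 <= omega i j)%N.
Proof.
rewrite /omega => ii' jj' lt; case: ifP => h; last by rewrite mul0n.
have -> : (i.+1 + j.+1 <= n)%N by lia.
by rewrite -expnSr leq_exp2l //; lia.
Qed.

Lemma omega_exchange n (i1 i2 j1 j2 : 'I_n) : (i1 < i2)%N -> (j1 < j2)%N ->
  (i1.+1 + j2.+1 <= n.+1)%N ->
  (omega i1 j2 + omega i2 j1 < omega i1 j1 + omega i2 j2)%N.
Proof.
move=> i12 j12 above.
have := @omega_mul3_le _ i1 i1 j1 j2 (leqnn _) (ltnW j12); rewrite j12 orbT.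
have := @omega_mul3_le _ i1 i2 j1 j1 (ltnW i12) (leqnn _); rewrite i12.
have : (0 < omega i1 j1)%N by apply: omega_gt0; lia.
lia.
Qed.

Lemma mxvec_index_eq m n (i i' : 'I_m) (j j' : 'I_n) :
  (mxvec_index i j == mxvec_index i' j') = ((i, j) == (i', j')).
Proof.
apply/eqP/eqP => [e | [-> ->]] //.
have [g gK _] := @curry_mxvec_bij m n.
by rewrite -[(i, j)]gK // -[(i', j')]gK //= e.
Qed.

Lemma oweight0 n : oweight (0 : 'X_{1..n * n}) = 0%N.
Proof. by rewrite /oweight big1 // => i _; rewrite big1 // => j _; rewrite mnm0E. Qed.

Lemma oweightD n (m1 m2 : 'X_{1..n * n}) :
  oweight (m1 + m2)%MM = (oweight m1 + oweight m2)%N.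
Proof.
rewrite /oweight -big_split; apply: eq_bigr => i _.
by rewrite -big_split; apply: eq_bigr => j _; rewrite mnmDE mulnDl.
Qed.

Lemma oweightU n (i j : 'I_n) : oweight U_(mxvec_index i j)%MM = omega i j.
Proof.
rewrite /oweight pair_big /= (bigD1 (i, j)) //= big1 => [|[x y] ne].
  by rewrite mnm1E eqxx mul1n addn0.
by rewrite mnm1E mxvec_index_eq eq_sym (negbTE ne).
Qed.

Section PermutationMonomials.

Variables (n k : nat) (r c : 'I_k -> 'I_n).

Definition perm_mon (s : 'S_k) : 'X_{1..n * n} :=
  (\sum_(a < k) U_(mxvec_index (r a) (c (s a))))%MM.

Lemma prod_genZ_perm (s : 'S_k) :
  \prod_(a < k) genZ n (r a) (c (s a)) = 'X_[perm_mon s].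
Proof.
rewrite /perm_mon (big_morph _ (@mpolyXD _ _) (@mpolyX0 _ _)).
by apply: eq_bigr => a _; rewrite mxE.
Qed.

Lemma minor_expansion :
  minor n r c = \sum_(s : 'S_k) (-1) ^+ s *: 'X_[perm_mon s].
Proof.
rewrite /minor /determinant; apply: eq_bigr => s _.
rewrite scaler_sign -mulr_sign -prod_genZ_perm.
by congr (_ * _); apply: eq_bigr => a _; rewrite mxE.
Qed.

Lemma oweight_perm_mon (s : 'S_k) :
  oweight (perm_mon s) = assignment_cost (fun a x => omega (r a) (c x)) s.
Proof.
rewrite /perm_mon (big_morph _ (@oweightD n) (oweight0 n)).
by apply: eq_bigr => a _; rewrite oweightU.
Qed.

End PermutationMonomials.

Arguments perm_mon {n k} r c s.

Section SumOfMonomials.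

Variables (R : comNzRingType) (N : nat) (I : finType).
Variables (coef : I -> R) (mon : I -> 'X_{1..N}).

Let P : {mpoly R[N]} := \sum_i coef i *: 'X_[mon i].

Lemma mcoeff_sum_scaleX m : P@_m = \sum_(i | mon i == m) coef i.
Proof.
rewrite /P raddf_sum [RHS]big_mkcond; apply: eq_bigr => i _ /=.
by rewrite mcoeffZ mcoeffX; case: eqP; rewrite ?mulr1 ?mulr0.
Qed.

Lemma msupp_sum_scaleX m : m \in msupp P -> exists i, mon i = m.
Proof.
rewrite mcoeff_msupp mcoeff_sum_scaleX => nz.
case: (pickP [pred i | mon i == m]) => [i /eqP mi | none]; first by exists i.
by rewrite big_pred0 // eqxx in nz.
Qed.

Lemma mcoeff_sum_scaleX_uniq i0 :
  (forall i, i != i0 -> mon i != mon i0) -> P@_(mon i0) = coef i0.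
Proof.
move=> uniq_mon; rewrite mcoeff_sum_scaleX (big_pred1 i0) // => i /=.
by case: (eqVneq i i0) => [-> | /uniq_mon /negbTE]; rewrite ?eqxx.
Qed.

End SumOfMonomials.

Theorem mainTheorem2 (n k : nat) (r c : 'I_k -> 'I_n) :
  incr r -> incr c ->
  (forall a : 'I_k, ((r a).+1 + (c (rev_ord a)).+1 <= n.+1)%N) ->
  exists m0 : 'X_{1..n * n},
    antidiag_term n r c = 'X_[m0] /\
    m0 \in msupp (minor n r c) /\
    (forall m, m \in msupp (minor n r c) -> m != m0 ->
       (oweight m0 < oweight m)%N).
Proof.
move=> incr_r incr_c above.
have weight_lt s : s != rev_perm k ->
    (oweight (perm_mon r c (rev_perm k)) < oweight (perm_mon r c s))%N.
  rewrite !oweight_perm_mon; apply: assignment_cost_rev_perm_min => a b x ab xa.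
  by apply: omega_exchange; [apply: incr_r | apply: incr_c | apply: above].
have mon_uniq s : s != rev_perm k -> perm_mon r c s != perm_mon r c (rev_perm k).
  by move/weight_lt; apply: contraTneq => ->; rewrite ltnn.
exists (perm_mon r c (rev_perm k)); split.
  by rewrite -prod_genZ_perm; apply: eq_bigr => a _; rewrite rev_permE.
rewrite minor_expansion mcoeff_msupp mcoeff_sum_scaleX_uniq // signr_eq0.
split=> // m /msupp_sum_scaleX [s <-] neq; apply: weight_lt.
by apply: contraNneq neq => ->.
Qed.
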